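(* Let $K_{2,m_1,m_2}=(Q_0,Q_1)$ be the generalized 2-Kronecker quiver having at least one source and at least one sink. Let $\beta=(n,\dots,n)\in\mathbb{Z}_{\ge0}^{Q_0}$, impose the complete standard filtration at each vertex, and let $\mathbb{U}_\beta=U^{Q_0}$. Then $\mathbb{C}[F^{\bullet}Rep(K_{2,m_1,m_2},\beta)]^{\mathbb{U}_\beta}=\mathbb{C}[\mathfrak{t}^{\oplus Q_1}]$.
   Context: $K_{2,m_1,m_2}$ is a quiver whose underlying graph consists of two vertices $u,v$ joined by two disjoint paths, one passing through $m_1$ intermediate vertices and the other through $m_2$ intermediate vertices (so it is a cycle), with the arrows oriented arbitrarily. At each vertex put $\mathbb{C}^n$ with the flag $0\subset\mathbb{C}^1\subset\cdots\subset\mathbb{C}^n$ of standard coordinate subspaces; $F^{\bullet}Rep(K_{2,m_1,m_2},\beta)=\mathfrak{b}^{\oplus Q_1}$ consists of tuples $(A_a)$ of upper triangular $n\times n$ matrices. $U$ is the group of upper unitriangular $n\times n$ matrices, acting by $(u_i)\cdot(A_a)=(u_{h(a)}A_au_{t(a)}^{-1})$ with $h,t$ head and tail. $\mathbb{C}[\mathfrak{t}^{\oplus Q_1}]$ is the subalgebra generated by the diagonal entries of all $A_a$. *)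

From HB Require Import structures.
From mathcomp Require Import all_boot all_order all_algebra.
From mathcomp Require Import mpoly.
Set Implicit Arguments. Unset Strict Implicit. Unset Printing Implicit Defensive.
Import Order.TTheory GRing.Theory Num.Theory.
Local Open Scope ring_scope.

Definition is_source (Q0 Q1 : finType) (hd : Q1 -> Q0) (x : Q0) : bool :=
  [forall a, hd a != x].
Definition is_sink (Q0 Q1 : finType) (tl : Q1 -> Q0) (x : Q0) : bool :=
  [forall a, tl a != x].

(* ---------- the generalized 2-Kronecker quiver K_{2,m1,m2} ----------
   Vertices are 'I_(m1+m2+2) placed around a cycle: u = 0, then the m1
   intermediate vertices 1..m1 of the first path, v = m1+1, then the m2
   intermediate vertices m1+2 .. m1+m2+1 of the second path back to u.
   Arrows are 'I_(m1+m2+2): arrow k joins vertex k and vertex k+1 (mod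
   m1+m2+2); the orientation o k = true means k -> k+1, false means
   k+1 -> k. *)
Definition Kvert (m1 m2 : nat) := 'I_(m1 + m2 + 2).
Definition Karr (m1 m2 : nat) := 'I_(m1 + m2 + 2).

Definition Ktail (m1 m2 : nat) (o : Karr m1 m2 -> bool) (k : Karr m1 m2)
  : Kvert m1 m2 := if o k then k else ordS k.
Definition Khead (m1 m2 : nat) (o : Karr m1 m2 -> bool) (k : Karr m1 m2)
  : Kvert m1 m2 := if o k then ordS k else k.

(* upper triangular = preserves the standard complete flag *)
Definition upper_tri (R : nzRingType) (n : nat) (A : 'M[R]_n) : bool :=
  [forall i : 'I_n, forall j : 'I_n, (j < i)%N ==> (A i j == 0)].

Definition unitriangular (R : nzRingType) (n : nat) (A : 'M[R]_n) : bool :=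
  upper_tri A && [forall i : 'I_n, A i i == 1].

Definition Uact (R : comUnitRingType) (Q0 Q1 : finType) (hd tl : Q1 -> Q0)
  (n : nat) (g : Q0 -> 'M[R]_n) (A : Q1 -> 'M[R]_n) : Q1 -> 'M[R]_n :=
  fun a => g (hd a) *m A a *m invmx (g (tl a)).

Definition nentries (Q1 : finType) (n : nat) : nat :=
  #|{: Q1 * ('I_n * 'I_n)}|.
Definition entry_coords (R : Type) (Q1 : finType) (n : nat)
  (A : Q1 -> 'M[R]_n) : 'I_(nentries Q1 n) -> R :=
  fun k => let x := enum_val k in A x.1 x.2.1 x.2.2.

Definition ndiag (Q1 : finType) (n : nat) : nat := #|{: Q1 * 'I_n}|.
Definition diag_coords (R : Type) (Q1 : finType) (n : nat)
  (A : Q1 -> 'M[R]_n) : 'I_(ndiag Q1 n) -> R :=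
  fun k => let x := enum_val k in A x.1 x.2 x.2.

(* An element of C[F^. Rep(Q, beta)] = C[b^{Q1}] is the restriction to
   b^{Q1} of a polynomial p in the entries.  It is U^{Q0}-invariant if its
   values on b^{Q1} are invariant under the action. *)
Definition U_invariant (R : comUnitRingType) (Q0 Q1 : finType)
  (hd tl : Q1 -> Q0) (n : nat) (p : {mpoly R[nentries Q1 n]}) : Prop :=
  forall (g : Q0 -> 'M[R]_n) (A : Q1 -> 'M[R]_n),
    (forall x, unitriangular (g x)) -> (forall a, upper_tri (A a)) ->
    p.@[entry_coords (Uact hd tl g A)] = p.@[entry_coords A].

(* The restriction of p to b^{Q1} lies in the subalgebra C[t^{Q1}]
   generated by the diagonal entries of all A_a. *)
Definition in_diag_subalgebra (R : comUnitRingType) (Q1 : finType) (n : nat)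
  (p : {mpoly R[nentries Q1 n]}) : Prop :=
  exists q : {mpoly R[ndiag Q1 n]},
    forall A : Q1 -> 'M[R]_n, (forall a, upper_tri (A a)) ->
      p.@[entry_coords A] = q.@[diag_coords A].

From HB Require Import structures.
From mathcomp Require Import all_boot all_order all_algebra.
From mathcomp Require Import mpoly.
From mathcomp Require Import zify ring.
Set Implicit Arguments. Unset Strict Implicit. Unset Printing Implicit Defensive.
Import Order.TTheory GRing.Theory Num.Theory.
Local Open Scope ring_scope.

(* Write E_ij for the matrix unit. Conjugating an upper triangular tuple A by
   the unitriangular matrices 1 + x_v E_ij (i < j, one scalar x_v per vertex)
   adds x_{h a} (A_a)_jj - x_{t a} (A_a)_ii to the entry (A_a)_ij and fixes
   every other entry at most as far from the diagonal. Hence, whenever these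
   linear systems in (x_v) are solvable, the superdiagonals of A can be
   cleared one after the other, and an invariant p satisfies p(A) = p(diag A).
   On the cycle K_{2,m1,m2} the systems are square; after moving the diagonal
   of A along a line A + t E they are invertible for all but finitely many t,
   and since both sides are polynomial in t, p(A) = p(diag A) holds for every
   A. Conversely the action does not change diagonals. *)

Section Triangular.
Variables (R : comUnitRingType) (n : nat).
Implicit Types (A B g : 'M[R]_n).

Lemma upper_triP A :
  reflect (forall i j : 'I_n, (j < i)%N -> A i j = 0) (upper_tri A).
Proof.
apply: (iffP forallP) => [A_up i j ji | A_up i].
  by move: (A_up i) => /forallP /(_ j) /implyP /(_ ji) /eqP.
by apply/forallP => j; apply/implyP => ji; apply/eqP; exact: A_up.
Qed.

Lemma upper_triE A (i j : 'I_n) : upper_tri A -> (j < i)%N -> A i j = 0.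
Proof. by move/upper_triP; apply. Qed.

Lemma upper_tri_mul A B : upper_tri A -> upper_tri B -> upper_tri (A *m B).
Proof.
move=> A_up B_up; apply/upper_triP => i j ji; rewrite mxE big1 // => k _.
have [ki | ik] := ltnP k i; first by rewrite upper_triE ?mul0r.
by rewrite (upper_triE B_up) ?mulr0 // (leq_trans ji ik).
Qed.

Lemma upper_tri_mul_diag A B i :
  upper_tri A -> upper_tri B -> (A *m B) i i = A i i * B i i.
Proof.
move=> A_up B_up; rewrite mxE (bigD1 i) //= big1 ?addr0 // => k ki.
have [k_lt_i | i_lt_k] := ltnP k i; first by rewrite upper_triE ?mul0r.
by rewrite (upper_triE B_up) ?mulr0 // ltn_neqAle eq_sym ki.
Qed.

Lemma unitriangular_upper g : unitriangular g -> upper_tri g.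
Proof. by case/andP. Qed.

Lemma unitriangular_diag g i : unitriangular g -> g i i = 1.
Proof. by case/andP => _ /forallP /(_ i) /eqP. Qed.

Lemma unitriangular_unitmx g : unitriangular g -> g \in unitmx.
Proof.
move=> g_U; rewrite unitmxE -det_tr det_trig.
  by rewrite big1 ?unitr1 // => i _; rewrite mxE unitriangular_diag.
apply/is_trig_mxP => i j ij; rewrite mxE upper_triE //.
exact: unitriangular_upper.
Qed.

(* The rows of g *m g^-1 = 1 determine g^-1 row by row from the bottom up. *)
Lemma unitriangular_invmx g : unitriangular g -> unitriangular (invmx g).
Proof.
move=> g_U; set h := invmx g.
have g_up := unitriangular_upper g_U.
have ghE i j : (i == j)%:R = h i j + \sum_(k | k != i) g i k * h k j.
  have := congr1 (fun M : 'M[R]_n => M i j) (mulmxV (unitriangular_unitmx g_U)).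
  by rewrite !mxE (bigD1 i) //= unitriangular_diag // mul1r => <-.
have h_low (j : 'I_n) : forall i : 'I_n, (j < i)%N -> h i j = 0.
  suff h_low_from m (i : 'I_n) : (n <= i + m)%N -> (j < i)%N -> h i j = 0.
    by move=> i; apply: (h_low_from n); rewrite leq_addl.
  elim: m i => [|m IHm] i; first by rewrite addn0 leqNgt ltn_ord.
  move=> le_n_im ji; have := ghE i j.
  rewrite -val_eqE gtn_eqF // big1 ?addr0 => [<- //|k ki].
  have [k_lt_i | i_lt_k] := ltnP k i; first by rewrite upper_triE ?mul0r.
  by rewrite IHm ?mulr0 //; move: ki; rewrite -val_eqE /=; lia.
apply/andP; split; first by apply/upper_triP => i j; exact: h_low.
apply/forallP => i; have := ghE i i; rewrite eqxx big1 ?addr0 => [<- //|k ki].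
have [k_lt_i | i_lt_k] := ltnP k i; first by rewrite upper_triE ?mul0r.
by rewrite h_low ?mulr0 // ltn_neqAle eq_sym ki.
Qed.

Lemma upper_tri_conj g1 g2 A : unitriangular g1 -> unitriangular g2 ->
  upper_tri A -> upper_tri (g1 *m A *m invmx g2).
Proof.
move=> g1_U g2_U A_up; apply: upper_tri_mul; last first.
  exact/unitriangular_upper/unitriangular_invmx.
exact: upper_tri_mul (unitriangular_upper g1_U) A_up.
Qed.

Lemma conj_unitriangular_diag g1 g2 A i : unitriangular g1 -> unitriangular g2 ->
  upper_tri A -> (g1 *m A *m invmx g2) i i = A i i.
Proof.
move=> g1_U g2_U A_up; have g2V_U := unitriangular_invmx g2_U.
have g1_up := unitriangular_upper g1_U.
rewrite upper_tri_mul_diag ?(upper_tri_mul g1_up A_up) ?(unitriangular_upper g2V_U) //.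
rewrite upper_tri_mul_diag // (unitriangular_diag i g1_U).
by rewrite (unitriangular_diag i g2V_U) mul1r mulr1.
Qed.

Definition elem_mx (x : R) (i j : 'I_n) : 'M[R]_n := 1%:M + x *: delta_mx i j.

Lemma elem_mx_unitriangular x (i j : 'I_n) :
  (i < j)%N -> unitriangular (elem_mx x i j).
Proof.
move=> ij; have not_ji (k l : 'I_n) : (l <= k)%N -> (k == i) && (l == j) = false.
  move=> lk; apply/negbTE/andP => -[/eqP ki /eqP lj].
  by move: lk; rewrite ki lj leqNgt => /negP.
apply/andP; split.
  apply/upper_triP => k l lk; rewrite !mxE -val_eqE /= (gtn_eqF lk).
  by rewrite not_ji ?(ltnW lk) // mulr0 addr0.
by apply/forallP => k; rewrite !mxE eqxx not_ji // mulr0 addr0.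
Qed.

Lemma invmx_elem_mx x (i j : 'I_n) :
  (i < j)%N -> invmx (elem_mx x i j) = elem_mx (- x) i j.
Proof.
move=> ij; have ji : j != i by rewrite -val_eqE /= gtn_eqF.
have inv : elem_mx x i j *m elem_mx (- x) i j = 1%:M.
  rewrite /elem_mx mulmxDr mulmx1 mulmxDl mul1mx -!scalemxAl -scalemxAr.
  by rewrite mul_delta_mx_0 // !scaler0 addr0 scaleNr addrK.
have [x_unit _] := mulmx1_unit inv.
by rewrite -[invmx _]mulmx1 -inv mulmxA mulVmx // mul1mx.
Qed.

Lemma elem_mx_conjE x y (i j : 'I_n) A k l :
  (elem_mx x i j *m A *m elem_mx (- y) i j) k l =
  A k l + x * ((k == i)%:R * A j l) - y * (A k i * (l == j)%:R)
   - x * y * ((k == i)%:R * A j i * (l == j)%:R).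
Proof.
have deltaA (B : 'M[R]_n) k' l' :
    \sum_m delta_mx i j k' m * B m l' = (k' == i)%:R * B j l'.
  rewrite (bigD1 j) //= big1 ?addr0 => [|m mj]; rewrite mxE ?eqxx ?andbT //.
  by rewrite (negbTE mj) andbF mul0r.
have Adelta (B : 'M[R]_n) k' l' :
    \sum_m B k' m * delta_mx i j m l' = B k' i * (l' == j)%:R.
  rewrite (bigD1 i) //= big1 ?addr0 => [|m mi]; rewrite mxE ?eqxx //.
  by rewrite (negbTE mi) mulr0.
rewrite /elem_mx mulmxDr mulmx1 mulmxDl mul1mx -!scalemxAl -!scalemxAr mulmxDl.
rewrite -scalemxAl !mxE !Adelta.
rewrite (deltaA A k l) mxE deltaA; ring.
Qed.

End Triangular.

Section QuiverAction.
Variables (R : comUnitRingType) (Q0 Q1 : finType) (hd tl : Q1 -> Q0) (n : nat).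
Implicit Types (A B : Q1 -> 'M[R]_n) (p : {mpoly R[nentries Q1 n]}).

Lemma eq_meval_entry_coords p A B :
  (forall a k l, A a k l = B a k l) -> p.@[entry_coords A] = p.@[entry_coords B].
Proof. by move=> AB; apply: meval_eq => k; rewrite /entry_coords AB. Qed.

Lemma diag_subalgebra_U_invariant p : in_diag_subalgebra p -> U_invariant hd tl p.
Proof.
move=> [q pq] g A g_U A_up.
rewrite !pq // => [|a]; last exact: upper_tri_conj.
by apply: meval_eq => k; rewrite /diag_coords /Uact conj_unitriangular_diag.
Qed.

Definition diag_part A : Q1 -> 'M[R]_n := fun a => diag_mx (\row_k A a k k).

Lemma diag_subalgebra_of_meval_diag_part p :
  (forall A, (forall a, upper_tri (A a)) ->
     p.@[entry_coords A] = p.@[entry_coords (diag_part A)]) ->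
  in_diag_subalgebra p.
Proof.
move=> p_diag.
pose X (x : Q1 * ('I_n * 'I_n)) : {mpoly R[ndiag Q1 n]} :=
  'X_(enum_rank (x.1, x.2.1)) *+ (x.2.1 == x.2.2).
exists (p \mPo [tuple X (enum_val k) | k < nentries Q1 n]) => A A_up.
rewrite p_diag // comp_mpoly_meval; apply: meval_eq => k.
rewrite tnth_mktuple /entry_coords /X; case: (enum_val k) => a [i j] /=.
by rewrite !mxE mevalMn mevalXU /diag_coords enum_rankK.
Qed.

End QuiverAction.

Section Elimination.
Variables (R : comUnitRingType) (Q0 Q1 : finType) (hd tl : Q1 -> Q0) (n : nat).
Variable d : Q1 -> 'I_n -> R.
Hypothesis d_solvable : forall i j : 'I_n, (i < j)%N -> forall b : Q1 -> R,
  exists x : Q0 -> R, forall a, x (hd a) * d a j - x (tl a) * d a i = b a.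
Variable p : {mpoly R[nentries Q1 n]}.
Hypothesis p_inv : U_invariant hd tl p.

Definition upper_with_diag (A : Q1 -> 'M[R]_n) :=
  (forall a, upper_tri (A a)) /\ (forall a k, A a k k = d a k).

Lemma clear_entry A (i j : 'I_n) : upper_with_diag A -> (i < j)%N ->
  exists A', [/\ upper_with_diag A', p.@[entry_coords A'] = p.@[entry_coords A],
    forall a, A' a i j = 0 &
    forall a (k l : 'I_n), (l + i <= k + j)%N -> (k != i) || (l != j) ->
      A' a k l = A a k l].
Proof.
move=> [A_up A_d] ij; have [x Hx] := d_solvable ij (fun a => - A a i j).
pose A' := Uact hd tl (fun v => elem_mx (x v) i j) A.
have A'E a k l : A' a k l = A a k l + x (hd a) * ((k == i)%:R * A a j l)
    - x (tl a) * (A a k i * (l == j)%:R)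
    - x (hd a) * x (tl a) * ((k == i)%:R * A a j i * (l == j)%:R).
  by rewrite /A' /Uact invmx_elem_mx // elem_mx_conjE.
have A_ji a : A a j i = 0 by rewrite upper_triE.
have A'_near a (k l : 'I_n) : (l + i <= k + j)%N -> (k != i) || (l != j) ->
    A' a k l = A a k l.
  move=> near kl_ne; rewrite A'E A_ji.
  have -> : (k == i)%:R * A a j l = 0.
    have [ki | _] := eqVneq k i; last by rewrite mul0r.
    rewrite ki eqxx /= -val_eqE /= in kl_ne near.
    by rewrite upper_triE ?mulr0 //; lia.
  have -> : A a k i * (l == j)%:R = 0.
    have [lj | _] := eqVneq l j; last by rewrite mulr0.
    rewrite lj eqxx orbF -val_eqE /= in kl_ne near.
    by rewrite upper_triE ?mul0r //; lia.
  by rewrite !(mulr0, mul0r, subr0, addr0).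
exists A'; split.
- split => [a | a k].
    apply/upper_triP => k l lk; rewrite A'_near ?upper_triE //; first lia.
    by rewrite -!val_eqE /=; lia.
  by rewrite A'_near ?A_d //; [lia | rewrite -!val_eqE /=; lia].
- by apply: p_inv => // v; exact: elem_mx_unitriangular.
- move=> a; rewrite A'E !eqxx A_ji !A_d -[A a i j]opprK -(Hx a) mulr1n; ring.
- exact: A'_near.
Qed.

Definition cleared (s c : nat) (A : Q1 -> 'M[R]_n) :=
  forall a (k l : 'I_n), (k < l)%N ->
    (l - k < s)%N || (l - k == s)%N && (k < c)%N -> A a k l = 0.

Lemma clear_superdiagonal_prefix s c A : upper_with_diag A -> cleared s 0 A ->
  exists A', [/\ upper_with_diag A', p.@[entry_coords A'] = p.@[entry_coords A]
    & cleared s c A'].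
Proof.
move=> A_ud A_cl; elim: c => [|c [A1 [A1_ud A1_p A1_cl]]]; first by exists A.
have [cs_lt_n | cs_ge_n] := ltnP (c + s) n; last first.
  by exists A1; split=> // a k l kl cond; apply: A1_cl => //; have := ltn_ord l; lia.
have [s0 | s_gt0] := posnP s.
  by exists A1; split=> // a k l kl cond; apply: A1_cl => //; lia.
have c_lt_n : (c < n)%N by lia.
pose i := Ordinal c_lt_n; pose j := Ordinal cs_lt_n.
have ij : (i < j)%N by rewrite /=; lia.
have [A2 [A2_ud A2_p A2_ij A2_near]] := clear_entry A1_ud ij.
exists A2; split=> [||a k l kl cond]; [by [] | by rewrite A2_p |].
have [/andP[/eqP-> /eqP->] | kl_ne] := boolP ((k == i) && (l == j)); first exact: A2_ij.
rewrite negb_and in kl_ne; rewrite A2_near //=; last by lia.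
by apply: A1_cl => //; move: kl_ne; rewrite -!val_eqE /=; lia.
Qed.

Lemma clear_superdiagonals s A : upper_with_diag A ->
  exists A', [/\ upper_with_diag A', p.@[entry_coords A'] = p.@[entry_coords A]
    & cleared s 0 A'].
Proof.
move=> A_ud; elim: s => [|s [A1 [A1_ud A1_p A1_cl]]].
  by exists A; split=> // a k l; rewrite ltn0 andbF.
have [A2 [A2_ud A2_p A2_cl]] := clear_superdiagonal_prefix n A1_ud A1_cl.
exists A2; split=> [||a k l kl cond]; [by [] | by rewrite A2_p |].
by apply: A2_cl => //; have := ltn_ord k; lia.
Qed.

Lemma meval_diag_part A : upper_with_diag A ->
  p.@[entry_coords A] = p.@[entry_coords (diag_part A)].
Proof.
move=> A_ud; have [A' [[A'_up A'_d] <- A'_cl]] := clear_superdiagonals n A_ud.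
apply: eq_meval_entry_coords => a k l; rewrite !mxE.
have [kl | lk | /val_inj <-] := ltngtP k l.
- rewrite -val_eqE /= (ltn_eqF kl) A'_cl //; have := ltn_ord l; lia.
- by rewrite upper_triE // -val_eqE /= (gtn_eqF lk).
- by rewrite A'_d eqxx mulr1n; case: A_ud => _ ->.
Qed.

End Elimination.

Lemma sum_indicator (R : nzRingType) N (w : 'I_N) (f : 'I_N -> R) :
  \sum_v (v == w)%:R * f v = f w.
Proof.
rewrite (bigD1 w) //= eqxx mul1r big1 ?addr0 // => v /negbTE ->.
by rewrite mul0r.
Qed.

Section DiagSystem.
Variables (R : comUnitRingType) (N n : nat) (hd tl : 'I_N -> 'I_N).

Definition diag_system_mx (d : 'I_N -> 'I_n -> R) (i j : 'I_n) : 'M[R]_N :=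
  \matrix_(a, v) ((v == hd a)%:R * d a j - (v == tl a)%:R * d a i).

Lemma mul_diag_system_mx d i j (x : 'cV[R]_N) a :
  (diag_system_mx d i j *m x) a 0 = x (hd a) 0 * d a j - x (tl a) 0 * d a i.
Proof.
rewrite mxE; under eq_bigr do rewrite mxE mulrBl -!mulrA.
by rewrite sumrB !sum_indicator ![x _ 0 * _]mulrC.
Qed.

Lemma diag_system_solvable d i j : diag_system_mx d i j \in unitmx ->
  forall b : 'I_N -> R, exists x : 'I_N -> R,
    forall a, x (hd a) * d a j - x (tl a) * d a i = b a.
Proof.
move=> S_unit b; exists (fun v => (invmx (diag_system_mx d i j) *m \col_a b a) v 0).
by move=> a; rewrite -mul_diag_system_mx mulKVmx // mxE.
Qed.

Lemma diag_system_mxD d e t i j :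
  diag_system_mx (fun a k => d a k + t * e a k) i j =
  diag_system_mx d i j + t *: diag_system_mx e i j.
Proof. by apply/matrixP => a v; rewrite !mxE; ring. Qed.

End DiagSystem.

Lemma diag_system_unitmx (F : fieldType) N n (hd tl : 'I_N -> 'I_N)
    (d : 'I_N -> 'I_n -> F) i j :
  (forall x : 'I_N -> F, (forall a, x (hd a) * d a j = x (tl a) * d a i) ->
     forall v, x v = 0) ->
  diag_system_mx hd tl d i j \in unitmx.
Proof.
move=> ker0; rewrite unitmxE unitfE -det_tr; apply/det0P => -[v v_neq0 vS].
apply/negP: v_neq0; rewrite negbK; apply/eqP/matrixP => z w; rewrite ord1 mxE.
apply: (ker0 (fun w => v 0 w)) => a; apply/eqP; rewrite -subr_eq0.
have := congr1 (fun M : 'cV[F]_N => M a 0) (congr1 trmx vS).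
by rewrite /= trmx_mul trmxK mul_diag_system_mx !mxE => ->.
Qed.

Lemma unitmx_pencil (F : fieldType) N (M E : 'M[F]_N) t :
  E \in unitmx -> ~~ root (char_poly (- (invmx E *m M))) t -> M + t *: E \in unitmx.
Proof.
move=> E_unit; apply: contraR; rewrite unitmxE unitfE negbK => /det0P [v v_neq0 vME].
rewrite -eigenvalue_root_char; apply/eigenvalueP; exists (v *m E).
  rewrite mulmxN mulmxA mulmxK //; apply/eqP; rewrite eq_sym -addr_eq0 addrC.
  by rewrite scalemxAr -mulmxDr vME.
by apply: contra v_neq0 => /eqP vE0; rewrite -(mulmxK E_unit v) vE0 mul0mx.
Qed.

Lemma meval_line (R : comNzRingType) k (p : {mpoly R[k]}) (a e : 'I_k -> R) :
  exists f : {poly R}, forall t, f.[t] = p.@[fun i => a i + t * e i].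
Proof.
exists (mmap (@polyC R) (fun i => (a i)%:P + (e i)%:P * 'X) p) => t.
rewrite /meval /mmap horner_sum; apply: eq_bigr => m _.
rewrite hornerM hornerC /mmap1 horner_prod; congr (_ * _).
by apply: eq_bigr => i _; rewrite horner_exp !hornerE mulrC.
Qed.

Lemma poly_eq0_off_roots (R : numDomainType) (q f : {poly R}) :
  q != 0 -> (forall t, ~~ root q t -> f.[t] = 0) -> f = 0.
Proof.
move=> q_neq0 f_off.
suff /eqP : f * q = 0 by rewrite mulf_eq0 (negbTE q_neq0) orbF => /eqP.
apply: (@roots_geq_poly_eq0 _ _ [seq i%:R | i <- iota 0 (size (f * q))]).
- apply/allP => _ /mapP [i _ ->]; apply/rootP; rewrite hornerM.
  by have [/rootP -> | /f_off ->] := boolP (root q i%:R); rewrite ?mulr0 ?mul0r.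
- by rewrite map_inj_uniq ?iota_uniq // => a b /eqP; rewrite eqr_nat => /eqP.
- by rewrite size_map size_iota.
Qed.

Lemma meval_eq_off_roots (R : numDomainType) k (p : {mpoly R[k]}) (a b e : 'I_k -> R)
    (q : {poly R}) :
  q != 0 ->
  (forall t, ~~ root q t ->
     p.@[fun i => a i + t * e i] = p.@[fun i => b i + t * e i]) ->
  p.@[a] = p.@[b].
Proof.
move=> q_neq0 ab_off.
have [fa faE] := meval_line p a e; have [fb fbE] := meval_line p b e.
have /eqP : fa - fb = 0.
  apply: (poly_eq0_off_roots q_neq0) => t /ab_off.
  by rewrite !hornerE faE fbE => ->; rewrite subrr.
have at0 c : p.@[fun i => c i + 0 * e i] = p.@[c].
  by apply: meval_eq => i; rewrite mul0r addr0.
by rewrite subr_eq0 => /eqP /(congr1 (horner^~ 0)) /=; rewrite faE fbE !at0.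
Qed.

Lemma ordS_const (T : Type) N (f : 'I_N -> T) :
  (forall k : 'I_N, (k.+1 < N)%N -> f (ordS k) = f k) -> forall k l, f k = f l.
Proof.
move=> f_step.
suff f_shift m (k l : 'I_N) : l = (k + m)%N :> nat -> f l = f k.
  move=> k l; have [kl | lk] := leqP k l.
    by rewrite (f_shift (l - k)%N k l) // subnKC.
  by rewrite (f_shift (k - l)%N l k) // subnKC // ltnW.
elim: m l => [|m IHm] l lE; first by congr f; apply: val_inj => /=; rewrite lE addn0.
have l_lt := ltn_ord l; have km_lt : (k + m < N)%N by lia.
rewrite -(IHm (Ordinal km_lt)) // -(f_step (Ordinal km_lt)) /=; last by lia.
by congr f; apply: val_inj => /=; rewrite modn_small; lia.
Qed.

Section KroneckerPerturbation.
Variables (C : numFieldType) (m1 m2 n : nat) (o : Karr m1 m2 -> bool).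

Fact last_arrow_subproof : (m1 + m2 + 1 < m1 + m2 + 2)%N.
Proof. by rewrite ltn_add2l. Qed.

Definition last_arrow : Karr m1 m2 := Ordinal last_arrow_subproof.

Definition Kpert (a : Karr m1 m2) (k : 'I_n) : C :=
  if a == last_arrow then k.+1%:R else 1.

(* A solution of the homogeneous system is constant along the arrows weighted
   by 1, hence on the whole cycle, and the last arrow then forces it to be 0. *)
Lemma Kpert_system_unitmx (i j : 'I_n) : (i < j)%N ->
  diag_system_mx (Khead o) (Ktail o) Kpert i j \in unitmx.
Proof.
move=> ij; apply: diag_system_unitmx => x x_ker.
have x_const : forall v w, x v = x w.
  apply: ordS_const => k k_lt.
  have k_ne : k != last_arrow by rewrite -val_eqE /=; lia.
  have := x_ker k; rewrite /Kpert (negbTE k_ne) !mulr1 /Khead /Ktail.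
  by case: (o k) => ->.
move=> v; have := x_ker last_arrow.
rewrite /Kpert eqxx (x_const (Khead _ _) v) (x_const (Ktail _ _) v) => /eqP.
by rewrite -subr_eq0 -mulrBr mulf_eq0 subr_eq0 eqr_nat eqSS gtn_eqF // orbF => /eqP.
Qed.

End KroneckerPerturbation.

Arguments Kpert {C m1 m2 n}.

Lemma Kronecker_meval_diag_part (C : numFieldType) m1 m2 n (o : Karr m1 m2 -> bool)
    (p : {mpoly C[nentries (Karr m1 m2) n]}) :
  U_invariant (Khead o) (Ktail o) p ->
  forall A, (forall a, upper_tri (A a)) ->
    p.@[entry_coords A] = p.@[entry_coords (diag_part A)].
Proof.
move=> p_inv A A_up.
pose E (a : Karr m1 m2) : 'M[C]_n := diag_mx (\row_k Kpert a k).
pose S (d : Karr m1 m2 -> 'I_n -> C) := diag_system_mx (Khead o) (Ktail o) d.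
pose dA a (k : 'I_n) : C := A a k k.
pose q := \prod_(ij : 'I_n * 'I_n)
  char_poly (- (invmx (S Kpert ij.1 ij.2) *m S dA ij.1 ij.2)).
have q_neq0 : q != 0.
  by apply/monic_neq0/monic_prod => ij _; exact: char_poly_monic.
apply: (meval_eq_off_roots (e := entry_coords E) q_neq0) => t q_t.
pose At a := A a + t *: E a.
have At_ud : upper_with_diag (fun a k => dA a k + t * Kpert a k) At.
  split=> [a | a k]; last by rewrite !mxE eqxx mulr1n.
  apply/upper_triP => k l lk.
  by rewrite !mxE upper_triE // -val_eqE /= (gtn_eqF lk) mulr0n mulr0 addr0.
have At_solvable (i j : 'I_n) : (i < j)%N -> forall b : Karr m1 m2 -> C,
    exists x : Kvert m1 m2 -> C, forall a,
    x (Khead o a) * (dA a j + t * Kpert a j)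
    - x (Ktail o a) * (dA a i + t * Kpert a i) = b a.
  move=> ij; apply: (diag_system_solvable (d := fun a k => dA a k + t * Kpert a k)).
  rewrite diag_system_mxD; apply: unitmx_pencil; first exact: Kpert_system_unitmx.
  apply: contra q_t => root_ij; apply/rootP/eqP; rewrite horner_prod.
  by apply/prodf_eq0; exists (i, j) => //; apply/eqP/rootP.
have lineE (B : Karr m1 m2 -> 'M_n) :
    p.@[entry_coords (fun a => B a + t *: E a)] =
    p.@[fun k => entry_coords B k + t * entry_coords E k].
  by apply: meval_eq => k; rewrite /entry_coords !mxE.
have diag_At a k l : diag_part At a k l = (diag_part A a + t *: E a) k l.
  by rewrite !mxE eqxx mulr1n; case: (k == l); rewrite ?mulr0n ?mulr0 ?addr0.
have := meval_diag_part At_solvable p_inv At_ud.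
by rewrite (eq_meval_entry_coords _ diag_At) /At !lineE.
Qed.

Theorem mainTheorem5 (C : numClosedFieldType) (m1 m2 n : nat)
  (o : Karr m1 m2 -> bool)
  (Hsource : exists x : Kvert m1 m2, is_source (Khead o) x)
  (Hsink : exists x : Kvert m1 m2, is_sink (Ktail o) x)
  (p : {mpoly C[nentries (Karr m1 m2) n]}) :
  U_invariant (Khead o) (Ktail o) p <-> in_diag_subalgebra p.
Proof.
split=> [p_inv | p_diag]; last exact: diag_subalgebra_U_invariant _ _ p_diag.
by apply: diag_subalgebra_of_meval_diag_part; exact: Kronecker_meval_diag_part p_inv.
Qed.
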